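(* Let $\{\gamma_k\}$ be strictly positive numbers with $\gamma_k\to\infty$, $\{g_k\}$ probability generating functions, $G_k(z)=k\gamma_k[g_k(e^{-z/k})-e^{-z/k}]$ for $z\ge0$, and $v_k(t,\lambda)=-k\log g_k^{[\gamma_kt]}(e^{-\lambda/k})$. Suppose that for every $a\ge0$ the sequence $\{G_k\}$ is uniformly Lipschitz on $[0,a]$ and $G_k\to\phi$ uniformly on $[0,a]$ for some function $\phi$ on $[0,\infty)$. Then for every $a\ge0$, $v_k(t,\lambda)$ converges uniformly on $(t,\lambda)\in[0,a]^2$ to some limit $v_t(\lambda)$, and the limit satisfies $$v_t(\lambda)=\lambda-\int_0^t\phi(v_s(\lambda))\,\mathrm ds,\qquad\lambda,t\ge0.$$
   Context: $g_k^n$ denotes the $n$-fold iterate of $g_k$ with $g_k^0(z)=z$; $[x]$ is the integer part of $x$. *)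

From Stdlib Require Import Reals.
From Coquelicot Require Import Coquelicot.
Open Scope R_scope.

Definition is_pgf (g : R -> R) : Prop :=
  exists p : nat -> R,
    (forall i, 0 <= p i) /\ is_series p 1 /\
    (forall s, 0 <= s <= 1 -> is_series (fun i => p i * s ^ i) (g s)).

Definition iter_fun (n : nat) (g : R -> R) : R -> R := Nat.iter n g.

Definition int_part (x : R) : nat := Z.to_nat (Int_part x).

Definition Gk (gam : nat -> R) (g : nat -> R -> R) (k : nat) (z : R) : R :=
  INR k * gam k * (g k (exp (- z / INR k)) - exp (- z / INR k)).

Definition vk (gam : nat -> R) (g : nat -> R -> R) (k : nat) (t lam : R) : R :=
  - INR k * ln (iter_fun (int_part (gam k * t)) (g k) (exp (- lam / INR k))).

From Stdlib Require Import Reals Lra Lia Psatz ZArith.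
From Coquelicot Require Import Coquelicot.
Open Scope R_scope.

(* Put s_n = g_k^n(exp (-lam/k)) and u_n = -k log s_n, so that v_k(t, lam) = u_[gam_k t].
   Since G_k(u_n) = k gam_k (s_(n+1) - s_n) and s_n stays within O(1/k) of 1 (convexity of g_k
   plus the Lipschitz bound on G_k near 0), log (s_(n+1) / s_n) is close to (s_(n+1) - s_n) / s_n,
   and u_n is an Euler scheme with step 1/gam_k for v' = -phi(v):
   gam_k (u_(n+1) - u_n) + phi(u_n) -> 0 uniformly.  Hence X = v_k(., lam) satisfies
   |X t - X s + (t - s) phi(X s)| <= K (t - s)^2 + beta_k with beta_k -> 0.  A discrete Gronwall
   argument shows that two such approximate solutions with the same initial value are uniformly
   close, so v_k is uniformly Cauchy.  The limit satisfies the estimate with beta = 0, hence has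
   derivative -phi(v), and the fundamental theorem of calculus gives the integral equation. *)

Definition lipschitz_on (f : R -> R) (b L : R) : Prop :=
  forall x y, 0 <= x <= b -> 0 <= y <= b -> Rabs (f x - f y) <= L * Rabs (x - y).

Lemma is_series_le (a b : nat -> R) (A B : R) :
  (forall i, a i <= b i) -> is_series a A -> is_series b B -> A <= B.
Proof.
  intros Hab Ha Hb.
  assert (Hsum : forall n, sum_n a n <= sum_n b n).
  { induction n as [|n IH].
    - rewrite !sum_O; apply Hab.
    - rewrite !sum_Sn; unfold plus; simpl; specialize (Hab (S n)); lra. }
  exact (is_lim_seq_le _ _ A B Hsum Ha Hb).
Qed.

Lemma pow_unit_interval (s : R) (i : nat) : 0 <= s <= 1 -> 0 <= s ^ i <= 1.
Proof.
  intros Hs; split; [apply pow_le; lra|]. rewrite <- (pow1 i). apply pow_incr; lra.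
Qed.

Lemma pow_chord_1_le (s th : R) (i : nat) : 0 <= s <= 1 -> 0 <= th <= 1 ->
  (th * s + (1 - th)) ^ i <= th * s ^ i + (1 - th).
Proof.
  intros Hs Ht; induction i as [|i IH]; simpl; [lra|].
  assert (Hsi := pow_unit_interval s i Hs).
  apply Rle_trans with ((th * s + (1 - th)) * (th * s ^ i + (1 - th))).
  - apply Rmult_le_compat_l; nra.
  - assert (0 <= th * (1 - th) * (1 - s) * (1 - s ^ i)).
    { apply Rmult_le_pos; [|lra]. apply Rmult_le_pos; [|lra]. nra. }
    nra.
Qed.

Lemma exp_le_mono x y : x <= y -> exp x <= exp y.
Proof. intros [H|<-]; [left; apply exp_increasing|right]; auto. Qed.

Lemma ln_le_sub_1 y : 0 < y -> ln y <= y - 1.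
Proof.
  intros Hy. rewrite <- (ln_exp (y - 1)). apply ln_le; auto.
  assert (X := exp_ineq1_le (y - 1)). lra.
Qed.

Lemma sub_ln_1_plus_le x : Rabs x <= 1/2 -> 0 <= x - ln (1 + x) <= 2 * x ^ 2.
Proof.
  intros Hx. apply Rabs_le_between in Hx.
  assert (Hup := ln_le_sub_1 (1 + x) ltac:(lra)).
  assert (Hlow := ln_le_sub_1 (/ (1 + x)) ltac:(apply Rinv_0_lt_compat; lra)).
  rewrite ln_Rinv in Hlow by lra.
  assert (E : x - (1 - / (1 + x)) = x ^ 2 / (1 + x)) by (field; lra).
  assert (x ^ 2 / (1 + x) <= 2 * x ^ 2).
  { apply Rmult_le_reg_r with (1 + x); [lra|].
    unfold Rdiv; rewrite Rmult_assoc, Rinv_l by lra. nra. }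
  lra.
Qed.

Lemma one_sub_exp_opp_ge x : 0 <= x <= 1 -> x / 2 <= 1 - exp (- x).
Proof.
  intros Hx.
  assert (E := exp_ineq1_le x).
  assert (Inv : exp (- x) * exp x = 1) by (rewrite <- exp_plus, Rplus_opp_l; apply exp_0).
  assert (0 < exp (- x)) by apply exp_pos.
  nra.
Qed.

Lemma pow_1_plus_le_exp (x : R) (j : nat) : 0 <= x -> (1 + x) ^ j <= exp (INR j * x).
Proof.
  intros Hx. induction j as [|j IH].
  - simpl. rewrite Rmult_0_l, exp_0. lra.
  - rewrite S_INR. replace ((INR j + 1) * x) with (x + INR j * x) by ring.
    rewrite exp_plus. simpl. apply Rmult_le_compat; try lra.
    + apply pow_le; lra.
    + apply exp_ineq1_le.
Qed.

Lemma int_part_bounds x : 0 <= x -> INR (int_part x) <= x < INR (int_part x) + 1.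
Proof.
  intros Hx. unfold int_part. destruct (base_Int_part x) as [H1 H2].
  assert (Hz : (0 <= Int_part x)%Z).
  { assert (IZR (Int_part x) > -1) by lra. apply lt_IZR in H. lia. }
  rewrite INR_IZR_INZ, Z2Nat.id by exact Hz. lra.
Qed.

Lemma int_part_le_compat x y : 0 <= x <= y -> (int_part x <= int_part y)%nat.
Proof.
  intros H. assert (A := int_part_bounds x ltac:(lra)). assert (B := int_part_bounds y ltac:(lra)).
  assert (C : INR (int_part x) < INR (S (int_part y))) by (rewrite S_INR; lra).
  apply INR_lt in C. lia.
Qed.

Lemma int_part_0 : int_part 0 = 0%nat.
Proof.
  assert (A := int_part_bounds 0 ltac:(lra)).
  destruct (int_part 0) as [|n]; auto. rewrite S_INR in A. assert (X := pos_INR n). lra.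
Qed.

Lemma exp_between s kk : 0 < s < 1 -> 1 <= kk ->
  exists w, 0 < w <= 1/2 /\ s < exp (- w / kk).
Proof.
  intros Hs Hk.
  assert (Hln : ln s < 0) by (rewrite <- ln_1; apply ln_increasing; lra).
  exists (Rmin 1 (- kk * ln s) / 2). split.
  - assert (0 < - kk * ln s) by nra.
    unfold Rmin; destruct Rle_dec; lra.
  - rewrite <- (exp_ln s) at 1 by lra. apply exp_increasing.
    apply Rmult_lt_reg_r with kk; [lra|].
    replace (- (Rmin 1 (- kk * ln s) / 2) / kk * kk) with (- (Rmin 1 (- kk * ln s) / 2)) by (field; lra).
    assert (0 < - kk * ln s) by nra.
    unfold Rmin; destruct Rle_dec; lra.
Qed.

(** * Probability generating functions *)

Section Pgf.

Variable g : R -> R.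
Hypothesis g_pgf : is_pgf g.

Lemma pgf_at_1 : g 1 = 1.
Proof.
  destruct g_pgf as [p [_ [Hp1 Hs]]].
  assert (H1 : is_series p (g 1)).
  { apply is_series_ext with (fun i => p i * 1 ^ i); [intros n; rewrite pow1; apply Rmult_1_r|].
    apply Hs; lra. }
  now rewrite <- (is_series_unique _ _ H1), (is_series_unique _ _ Hp1).
Qed.

Lemma pgf_unit_interval s : 0 <= s <= 1 -> 0 <= g s <= 1.
Proof.
  intros Hs01. destruct g_pgf as [p [Hp [Hp1 Hs]]].
  assert (Hsi := fun i => pow_unit_interval s i Hs01).
  split.
  - assert (Z := is_series_scal 0 p 1 Hp1).
    replace 0 with (scal 0 (1 : R)) by (unfold scal; simpl; unfold mult; simpl; ring).
    refine (is_series_le _ _ _ _ _ Z (Hs s Hs01)).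
    intros i; unfold scal; simpl; unfold mult; simpl. specialize (Hp i); specialize (Hsi i); nra.
  - apply (is_series_le _ p) with (2 := Hs s Hs01); auto.
    intros i; specialize (Hp i); specialize (Hsi i); nra.
Qed.

Lemma pgf_chord_1 s th : 0 <= s <= 1 -> 0 <= th <= 1 ->
  g (th * s + (1 - th)) <= th * g s + (1 - th).
Proof.
  intros Hs01 Ht. destruct g_pgf as [p [Hp [Hp1 Hs]]].
  assert (A := is_series_plus _ _ _ _ (is_series_scal th _ _ (Hs s Hs01))
                                      (is_series_scal (1 - th) _ _ Hp1)).
  replace (th * g s + (1 - th)) with (plus (scal th (g s)) (scal (1 - th) 1))
    by (unfold plus, scal; simpl; unfold mult; simpl; ring).
  refine (is_series_le _ _ _ _ _ (Hs _ _) A); [|nra].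
  intros i; unfold plus, scal; simpl; unfold mult; simpl.
  assert (X := pow_chord_1_le s th i Hs01 Ht). specialize (Hp i). nra.
Qed.

Lemma pgf_secant_le s r : 0 <= s < r -> r < 1 ->
  (1 - g s) * (1 - r) <= (1 - g r) * (1 - s).
Proof.
  intros Hs Hr.
  set (th := (1 - r) / (1 - s)).
  assert (Hth : 0 <= th <= 1).
  { unfold th; split; [apply Rdiv_le_0_compat; lra|].
    apply Rmult_le_reg_r with (1 - s); [lra|].
    unfold Rdiv; rewrite Rmult_assoc, Rinv_l by lra. lra. }
  assert (C := pgf_chord_1 s th ltac:(lra) Hth).
  replace (th * s + (1 - th)) with r in C by (unfold th; field; lra).
  assert (E : (1 - g s) * (1 - r) = th * (1 - g s) * (1 - s)) by (unfold th; field; lra).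
  rewrite E. apply Rmult_le_compat_r; lra.
Qed.

(* The hypothesis is [|G(w)| <= L1 w] on [0, 1]; applied at a point [r = exp (-w/kk)] between [s]
   and 1 it bounds the secant slope of [g] at 1, and the secants through 1 steepen towards 1. *)
Lemma pgf_one_sub_le (kk gm L1 : R) :
  1 <= kk -> 0 < gm -> 0 <= L1 ->
  (forall w, 0 <= w <= 1 -> Rabs (kk * gm * (g (exp (- w / kk)) - exp (- w / kk))) <= L1 * w) ->
  forall s, 0 <= s <= 1 -> 1 - g s <= (1 + 2 * L1 / gm) * (1 - s).
Proof.
  intros Hk Hgm HL1 HG s Hs.
  assert (HLg : 0 <= 2 * L1 / gm) by (apply Rdiv_le_0_compat; lra).
  assert (Hgs := pgf_unit_interval s Hs).
  destruct (Req_dec s 1) as [->|Hs1]; [rewrite pgf_at_1; lra|].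
  destruct (Req_dec s 0) as [->|Hs0]; [lra|].
  destruct (exp_between s kk ltac:(lra) Hk) as [w [Hw Hsr]].
  set (r := exp (- w / kk)).
  assert (Hwk : 0 < w / kk <= 1).
  { split; [apply Rdiv_lt_0_compat; lra|].
    apply Rmult_le_reg_r with kk; [lra|]. unfold Rdiv; rewrite Rmult_assoc, Rinv_l by lra. lra. }
  assert (Hr : s < r < 1).
  { split; [exact Hsr|]. unfold r. rewrite <- exp_0. apply exp_increasing. unfold Rdiv in *; lra. }
  assert (H1r : w / kk / 2 <= 1 - r)
    by (unfold r; replace (- w / kk) with (- (w / kk)) by (unfold Rdiv; ring);
        apply one_sub_exp_opp_ge; lra).
  assert (Hgr : 1 - g r <= (1 + 2 * L1 / gm) * (1 - r)).
  { assert (G := HG w ltac:(lra)). fold r in G. apply Rabs_le_between in G.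
    assert (r - g r <= L1 * (w / kk) / gm).
    { apply Rmult_le_reg_r with (kk * gm); [nra|].
      replace (L1 * (w / kk) / gm * (kk * gm)) with (L1 * w) by (field; lra). nra. }
    assert (L1 * (w / kk) / gm <= 2 * L1 / gm * (1 - r)).
    { replace (L1 * (w / kk) / gm) with (2 * L1 / gm * (w / kk / 2)) by (field; lra).
      apply Rmult_le_compat_l; lra. }
    lra. }
  assert (S := pgf_secant_le s r ltac:(lra) ltac:(lra)).
  apply Rmult_le_reg_r with (1 - r); [lra|]. nra.
Qed.

End Pgf.

Lemma log_increment_estimate (kk gm s gs M eps ph D : R) :
  1 <= kk -> 1 <= gm -> 1/2 <= s <= 1 -> 1 - s <= D / kk -> 0 <= M -> 4 * M <= kk * gm ->
  Rabs (kk * gm * (gs - s)) <= M -> Rabs (kk * gm * (gs - s) - ph) <= eps ->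
  Rabs (gm * (- kk * ln gs - - kk * ln s) + ph) <= eps + 8 * M ^ 2 / (kk * gm) + 2 * M * D / kk.
Proof.
  intros Hk Hg Hs HD HM HMk HGv Hph.
  assert (Hkg : 1 <= kk * gm) by nra.
  set (x := (gs - s) / s).
  assert (HGx : kk * gm * (gs - s) = kk * gm * s * x) by (unfold x; field; lra).
  assert (Hx : Rabs (kk * gm * x) <= 2 * M).
  { apply Rmult_le_reg_l with s; [lra|].
    rewrite <- (Rabs_pos_eq s) at 1 by lra. rewrite <- Rabs_mult.
    replace (s * (kk * gm * x)) with (kk * gm * (gs - s)) by (rewrite HGx; ring). nra. }
  rewrite Rabs_mult, (Rabs_pos_eq (kk * gm)) in Hx by lra.
  assert (Hx2 : Rabs x <= 2 * M / (kk * gm))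
    by (apply Rmult_le_reg_l with (kk * gm); [lra|];
        replace (kk * gm * (2 * M / (kk * gm))) with (2 * M) by (field; lra); lra).
  assert (Hxh : Rabs x <= 1/2).
  { apply Rle_trans with (1 := Hx2). apply Rmult_le_reg_r with (kk * gm); [lra|].
    unfold Rdiv; rewrite Rmult_assoc, Rinv_l by lra. lra. }
  assert (Hxb := Hxh). apply Rabs_le_between in Hxb.
  assert (Hgs : gs = s * (1 + x)) by (unfold x; field; lra).
  rewrite Hgs, ln_mult by lra.
  assert (Q := sub_ln_1_plus_le x Hxh).
  replace (gm * (- kk * (ln s + ln (1 + x)) - - kk * ln s) + ph)
    with ((ph - kk * gm * (gs - s)) + kk * gm * (x - ln (1 + x)) - kk * gm * x * (1 - s))
    by (rewrite HGx; ring).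
  assert (T1 : Rabs (ph - kk * gm * (gs - s)) <= eps) by (rewrite Rabs_minus_sym; exact Hph).
  assert (T2 : Rabs (kk * gm * (x - ln (1 + x))) <= 8 * M ^ 2 / (kk * gm)).
  { rewrite Rabs_pos_eq by nra.
    assert (x ^ 2 <= (2 * M / (kk * gm)) ^ 2) by (apply pow_maj_Rabs; exact Hx2).
    replace (8 * M ^ 2 / (kk * gm)) with (kk * gm * (2 * (2 * M / (kk * gm)) ^ 2)) by (field; lra).
    apply Rmult_le_compat_l; lra. }
  assert (T3 : Rabs (kk * gm * x * (1 - s)) <= 2 * M * D / kk).
  { rewrite Rabs_mult, (Rabs_mult (kk * gm)), (Rabs_pos_eq (kk * gm)), (Rabs_pos_eq (1 - s)) by lra.
    replace (2 * M * D / kk) with (2 * M * (D / kk)) by (field; lra).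
    assert (Hax := Rabs_pos x). apply Rmult_le_compat; nra. }
  assert (A := Rabs_triang (ph - kk * gm * (gs - s) + kk * gm * (x - ln (1 + x))) (- (kk * gm * x * (1 - s)))).
  assert (B := Rabs_triang (ph - kk * gm * (gs - s)) (kk * gm * (x - ln (1 + x)))).
  rewrite Rabs_Ropp in A. unfold Rminus at 1. lra.
Qed.

(** * Euler schemes *)

(* [X] solves [x' = - ph x] on [[0, a]] up to a local error [K (t - s)^2] and a uniform slack [beta]. *)
Definition approx_flow (ph : R -> R) (a K beta : R) (X : R -> R) : Prop :=
  forall s t, 0 <= s <= t -> t <= a ->
    Rabs (X t - X s + (t - s) * ph (X s)) <= K * (t - s) ^ 2 + beta.

Lemma int_part_scaled_gap gm s t : 0 < gm -> 0 <= s <= t ->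
  Rabs (t - s - (INR (int_part (gm * t)) - INR (int_part (gm * s))) / gm) <= 1 / gm.
Proof.
  intros Hgm Hst.
  assert (Ss := int_part_bounds (gm * s) ltac:(nra)).
  assert (St := int_part_bounds (gm * t) ltac:(nra)).
  replace (t - s - (INR (int_part (gm * t)) - INR (int_part (gm * s))) / gm)
    with ((gm * t - INR (int_part (gm * t)) - (gm * s - INR (int_part (gm * s)))) / gm) by (field; lra).
  unfold Rdiv. rewrite Rabs_mult, (Rabs_pos_eq (/ gm)) by (left; apply Rinv_0_lt_compat; lra).
  apply Rmult_le_compat_r; [left; apply Rinv_0_lt_compat; lra|].
  apply Rabs_le. lra.
Qed.

Section EulerScheme.

Variables (u : nat -> R) (ph : R -> R) (gm eta L M B a : R).
Hypotheses (gm_ge1 : 1 <= gm) (eta_bounds : 0 <= eta <= 1) (L_ge0 : 0 <= L) (M_ge0 : 0 <= M).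
Hypothesis u_range : forall n, (n <= int_part (gm * a))%nat -> 0 <= u n <= B.
Hypothesis ph_lip : lipschitz_on ph B L.
Hypothesis ph_bound : forall x, 0 <= x <= B -> Rabs (ph x) <= M.
Hypothesis residual : forall n, (n < int_part (gm * a))%nat ->
  Rabs (gm * (u (S n) - u n) + ph (u n)) <= eta.

Lemma euler_increment n : (n < int_part (gm * a))%nat ->
  Rabs (u (S n) - u n) <= (M + 1) / gm.
Proof.
  intros Hn.
  replace (u (S n) - u n) with ((gm * (u (S n) - u n) + ph (u n) - ph (u n)) / gm) by (field; lra).
  unfold Rdiv; rewrite Rabs_mult, (Rabs_pos_eq (/ gm)) by (left; apply Rinv_0_lt_compat; lra).
  apply Rmult_le_compat_r; [left; apply Rinv_0_lt_compat; lra|].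
  assert (T := Rabs_triang (gm * (u (S n) - u n) + ph (u n)) (- ph (u n))).
  rewrite Rabs_Ropp in T.
  assert (R1 := residual n Hn). assert (R2 := ph_bound (u n) (u_range n ltac:(lia))).
  unfold Rminus at 1. lra.
Qed.

Lemma euler_displacement n p : (n + p <= int_part (gm * a))%nat ->
  Rabs (u (n + p)%nat - u n) <= INR p * (M + 1) / gm.
Proof.
  induction p as [|p IH]; intros Hnp.
  - rewrite Nat.add_0_r, Rminus_diag, Rabs_R0. simpl. right; field; lra.
  - replace (n + S p)%nat with (S (n + p)) by lia.
    replace (u (S (n + p)) - u n) with ((u (S (n + p)) - u (n + p)%nat) + (u (n + p)%nat - u n)) by ring.
    eapply Rle_trans; [apply Rabs_triang|].
    assert (I := euler_increment (n + p) ltac:(lia)).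
    replace (INR (S p) * (M + 1) / gm) with ((M + 1) / gm + INR p * (M + 1) / gm)
      by (rewrite S_INR; field; lra).
    specialize (IH ltac:(lia)). lra.
Qed.

Lemma euler_drift n p : (n + p <= int_part (gm * a))%nat ->
  Rabs (u (n + p)%nat - u n + (INR p / gm) * ph (u n)) <=
    INR p * eta / gm + L * (M + 1) * INR p ^ 2 / gm ^ 2.
Proof.
  induction p as [|p IH]; intros Hnp.
  - rewrite Nat.add_0_r. simpl INR.
    replace (u n - u n + 0 / gm * ph (u n)) with 0 by (field; lra).
    rewrite Rabs_R0. right; field; lra.
  - replace (n + S p)%nat with (S (n + p)) by lia.
    set (r := gm * (u (S (n + p)) - u (n + p)%nat) + ph (u (n + p)%nat)).
    replace (u (S (n + p)) - u n + INR (S p) / gm * ph (u n)) with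
      ((u (n + p)%nat - u n + INR p / gm * ph (u n)) + (r + (ph (u n) - ph (u (n + p)%nat))) / gm)
      by (unfold r; rewrite S_INR; field; lra).
    eapply Rle_trans; [apply Rabs_triang|].
    assert (Hr := residual (n + p) ltac:(lia)). fold r in Hr.
    assert (Hlip := ph_lip (u n) (u (n + p)%nat) (u_range n ltac:(lia)) (u_range (n + p) ltac:(lia))).
    rewrite (Rabs_minus_sym (u n)) in Hlip.
    assert (Hd := euler_displacement n p ltac:(lia)).
    assert (Hsum : Rabs (r + (ph (u n) - ph (u (n + p)%nat))) <= eta + L * (INR p * (M + 1) / gm)).
    { eapply Rle_trans; [apply Rabs_triang|].
      apply Rplus_le_compat; [exact Hr|]. eapply Rle_trans; [exact Hlip|].
      apply Rmult_le_compat_l; auto. }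
    assert (Hq : Rabs ((r + (ph (u n) - ph (u (n + p)%nat))) / gm)
                 <= eta / gm + L * (M + 1) * INR p / gm ^ 2).
    { replace (eta / gm + L * (M + 1) * INR p / gm ^ 2) with ((eta + L * (INR p * (M + 1) / gm)) / gm)
        by (field; lra).
      unfold Rdiv at 1 3; rewrite Rabs_mult, (Rabs_pos_eq (/ gm)) by (left; apply Rinv_0_lt_compat; lra).
      apply Rmult_le_compat_r; [left; apply Rinv_0_lt_compat; lra|exact Hsum]. }
    specialize (IH ltac:(lia)).
    assert (Hp := pos_INR p).
    assert (0 <= L * (M + 1) * (INR p + 1) / gm ^ 2)
      by (apply Rdiv_le_0_compat; [apply Rmult_le_pos|apply pow_lt]; nra).
    replace (INR (S p) * eta / gm + L * (M + 1) * INR (S p) ^ 2 / gm ^ 2) with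
      (INR p * eta / gm + L * (M + 1) * INR p ^ 2 / gm ^ 2 + eta / gm
       + L * (M + 1) * INR p / gm ^ 2 + L * (M + 1) * (INR p + 1) / gm ^ 2)
      by (rewrite S_INR; field; lra).
    lra.
Qed.

(* Time [t] is step [[gm t]] of the scheme; rounding costs the [M / gm] term. *)
Lemma euler_interpolant_approx_flow :
  approx_flow ph a (2 * L * (M + 1)) ((a + 1) * eta + 2 * L * (M + 1) / gm ^ 2 + M / gm)
    (fun t => u (int_part (gm * t))).
Proof.
  intros s t Hst Hta.
  set (n := int_part (gm * s)). set (m := int_part (gm * t)).
  assert (Hnm : (n <= m)%nat) by (apply int_part_le_compat; nra).
  assert (Hma : (m <= int_part (gm * a))%nat) by (apply int_part_le_compat; nra).
  assert (C := euler_drift n (m - n) ltac:(lia)).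
  replace (n + (m - n))%nat with m in C by lia.
  rewrite minus_INR in C by exact Hnm.
  set (d := (INR m - INR n) / gm) in *.
  assert (Hd : Rabs (t - s - d) <= 1 / gm) by (apply int_part_scaled_gap; lra).
  assert (Hd0 : 0 <= d) by (unfold d; apply Rdiv_le_0_compat; [apply le_INR in Hnm; lra|lra]).
  replace ((INR m - INR n) * eta / gm) with (d * eta) in C by (unfold d; field; lra).
  replace (L * (M + 1) * (INR m - INR n) ^ 2 / gm ^ 2) with (L * (M + 1) * d ^ 2) in C by (unfold d; field; lra).
  assert (Hphn := ph_bound (u n) (u_range n ltac:(lia))).
  replace (u m - u n + (t - s) * ph (u n)) with ((u m - u n + d * ph (u n)) + (t - s - d) * ph (u n)) by ring.
  eapply Rle_trans; [apply Rabs_triang|]. rewrite Rabs_mult.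
  assert (X1 : Rabs (t - s - d) * Rabs (ph (u n)) <= M / gm).
  { replace (M / gm) with (1 / gm * M) by (field; lra).
    apply Rmult_le_compat; auto using Rabs_pos. }
  assert (X2 : d * eta <= (a + 1) * eta).
  { apply Rmult_le_compat_r; [lra|]. apply Rabs_le_between in Hd.
    assert (1 / gm <= 1) by (apply Rmult_le_reg_r with gm; [lra|]; unfold Rdiv; rewrite Rmult_assoc, Rinv_l; lra).
    lra. }
  assert (X3 : d ^ 2 <= 2 * (t - s) ^ 2 + 2 * (1 / gm) ^ 2).
  { apply Rabs_le_between in Hd.
    assert (d ^ 2 <= (t - s + 1 / gm) ^ 2) by (apply pow_incr; lra).
    assert (0 <= (t - s - 1 / gm) ^ 2) by apply pow2_ge_0.
    nra. }
  assert (0 <= L * (M + 1)) by nra.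
  assert (X4 : L * (M + 1) * d ^ 2 <= 2 * L * (M + 1) * (t - s) ^ 2 + 2 * L * (M + 1) / gm ^ 2).
  { replace (2 * L * (M + 1) * (t - s) ^ 2 + 2 * L * (M + 1) / gm ^ 2)
      with (L * (M + 1) * (2 * (t - s) ^ 2 + 2 * (1 / gm) ^ 2)) by (field; lra).
    apply Rmult_le_compat_l; lra. }
  lra.
Qed.

End EulerScheme.

(** * Approximate solutions of x' = -phi(x) *)

Lemma approx_flow_increment (ph X : R -> R) (a B M K beta : R) :
  (forall x, 0 <= x <= B -> Rabs (ph x) <= M) ->
  (forall t, 0 <= t <= a -> 0 <= X t <= B) ->
  approx_flow ph a K beta X ->
  forall s t, 0 <= s <= t -> t <= a ->
    Rabs (X t - X s) <= M * (t - s) + K * (t - s) ^ 2 + beta.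
Proof.
  intros Hph HX HXf s t Hst Hta.
  replace (X t - X s) with ((X t - X s + (t - s) * ph (X s)) - (t - s) * ph (X s)) by ring.
  eapply Rle_trans; [apply Rabs_triang|].
  rewrite Rabs_Ropp, Rabs_mult, (Rabs_pos_eq (t - s)) by lra.
  assert ((t - s) * Rabs (ph (X s)) <= (t - s) * M)
    by (apply Rmult_le_compat_l; [lra|apply Hph, HX; lra]).
  assert (Q := HXf s t Hst Hta). lra.
Qed.

Section ApproxFlowStability.

Variables (ph X Y : R -> R) (a B L M K beta : R).
Hypotheses (L_ge0 : 0 <= L) (M_ge0 : 0 <= M) (K_ge0 : 0 <= K) (beta_ge0 : 0 <= beta).
Hypothesis ph_lip : lipschitz_on ph B L.
Hypothesis ph_bound : forall x, 0 <= x <= B -> Rabs (ph x) <= M.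
Hypotheses (X_range : forall t, 0 <= t <= a -> 0 <= X t <= B)
  (Y_range : forall t, 0 <= t <= a -> 0 <= Y t <= B).
Hypothesis XY_0 : X 0 = Y 0.
Hypotheses (X_flow : approx_flow ph a K beta X) (Y_flow : approx_flow ph a K beta Y).

(* Discrete Gronwall: one grid step of length [dl] amplifies the gap by [1 + L dl] and adds
   the two local errors. *)
Lemma approx_flows_grid_gap (dl : R) (N : nat) : 0 < dl -> INR N * dl = a ->
  forall j, (j <= N)%nat ->
    Rabs (X (INR j * dl) - Y (INR j * dl)) <= (1 + L * dl) ^ j * INR j * (2 * K * dl ^ 2 + 2 * beta).
Proof.
  intros Hdl HN. set (c0 := 2 * K * dl ^ 2 + 2 * beta).
  assert (Hc0 : 0 <= c0) by (unfold c0; nra).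
  assert (HLd : 0 <= L * dl) by nra.
  induction j as [|j IH]; intros Hj.
  { simpl. rewrite Rmult_0_l, XY_0, Rminus_diag, Rabs_R0. lra. }
  specialize (IH ltac:(lia)).
  assert (Hj1 : INR (S j) * dl <= a) by (rewrite <- HN; apply Rmult_le_compat_r; [lra|apply le_INR; lia]).
  assert (Hj0 : 0 <= INR j * dl) by (apply Rmult_le_pos; [apply pos_INR|lra]).
  assert (E : INR (S j) * dl - INR j * dl = dl) by (rewrite S_INR; ring).
  assert (Hjs : INR j * dl <= INR (S j) * dl) by lra.
  assert (Ex := X_flow (INR j * dl) (INR (S j) * dl) ltac:(lra) Hj1).
  assert (Ey := Y_flow (INR j * dl) (INR (S j) * dl) ltac:(lra) Hj1).
  rewrite E in Ex, Ey.
  assert (Lp := ph_lip (X (INR j * dl)) (Y (INR j * dl)) (X_range (INR j * dl) ltac:(lra)) (Y_range (INR j * dl) ltac:(lra))).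
  set (xs := X (INR j * dl)) in *. set (ys := Y (INR j * dl)) in *.
  set (xt := X (INR (S j) * dl)) in *. set (yt := Y (INR (S j) * dl)) in *.
  replace (xt - yt) with ((xt - xs + dl * ph xs) - (yt - ys + dl * ph ys) + ((xs - ys) - dl * (ph xs - ph ys))) by ring.
  eapply Rle_trans; [apply Rabs_triang|].
  eapply Rle_trans; [apply Rplus_le_compat; [apply Rabs_triang|apply Rabs_triang]|].
  rewrite Rabs_Ropp, Rabs_Ropp, Rabs_mult, (Rabs_pos_eq dl) by lra.
  set (q := (1 + L * dl) ^ j) in *.
  assert (Hq : 1 <= q) by (apply pow_R1_Rle; lra).
  assert (Hsucc : (1 + L * dl) ^ S j * INR (S j) * c0 = (1 + L * dl) * q * INR j * c0 + (1 + L * dl) * q * c0)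
    by (unfold q; rewrite S_INR; simpl; ring).
  rewrite Hsucc.
  assert (dl * Rabs (ph xs - ph ys) <= L * dl * Rabs (xs - ys)) by nra.
  assert (Rabs (xs - ys) * (L * dl) <= q * INR j * c0 * (L * dl)) by (apply Rmult_le_compat_r; lra).
  assert (c0 <= (1 + L * dl) * q * c0) by (rewrite <- (Rmult_1_l c0) at 1; apply Rmult_le_compat_r; nra).
  unfold c0 in *. nra.
Qed.

Lemma approx_flows_close (dl : R) (N : nat) : 0 < dl -> INR N * dl = a ->
  forall t, 0 <= t <= a ->
    Rabs (X t - Y t) <= exp (L * a) * INR N * (2 * K * dl ^ 2 + 2 * beta)
                        + 2 * (M * dl + K * dl ^ 2 + beta).
Proof.
  intros Hdl HN t Ht.
  set (j := int_part (t / dl)).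
  assert (Sj := int_part_bounds (t / dl) ltac:(apply Rdiv_le_0_compat; lra)). fold j in Sj.
  assert (Sj' : INR j * dl <= t < INR j * dl + dl).
  { replace t with (t / dl * dl) by (field; lra). split; nra. }
  assert (HjN : (j <= N)%nat) by (apply INR_le; nra).
  assert (Grid := approx_flows_grid_gap dl N Hdl HN j HjN).
  set (s := INR j * dl) in *.
  assert (Hs0 : 0 <= s) by (unfold s; apply Rmult_le_pos; [apply pos_INR|lra]).
  assert (Hpow : (1 + L * dl) ^ j <= exp (L * a)).
  { eapply Rle_trans; [apply pow_1_plus_le_exp; nra|]. apply exp_le_mono.
    replace (INR j * (L * dl)) with (L * s) by (unfold s; ring). apply Rmult_le_compat_l; lra. }
  assert (Hc : (1 + L * dl) ^ j * INR j * (2 * K * dl ^ 2 + 2 * beta)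
               <= exp (L * a) * INR N * (2 * K * dl ^ 2 + 2 * beta)).
  { apply Rmult_le_compat_r; [nra|]. apply Rmult_le_compat; try lra.
    - apply pow_le; nra.
    - apply pos_INR.
    - apply le_INR; exact HjN. }
  assert (Hts : (t - s) ^ 2 <= dl ^ 2) by (apply pow_incr; lra).
  assert (Ix := approx_flow_increment ph X a B M K beta ph_bound X_range X_flow s t ltac:(lra) ltac:(lra)).
  assert (Iy := approx_flow_increment ph Y a B M K beta ph_bound Y_range Y_flow s t ltac:(lra) ltac:(lra)).
  replace (X t - Y t) with ((X t - X s) + (X s - Y s) - (Y t - Y s)) by ring.
  assert (T1 := Rabs_triang (X t - X s + (X s - Y s)) (- (Y t - Y s))).
  assert (T2 := Rabs_triang (X t - X s) (X s - Y s)).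
  rewrite Rabs_Ropp in T1. unfold Rminus at 1. nra.
Qed.

End ApproxFlowStability.

Lemma lipschitz_continuous (c : R -> R) (Lc x : R) : 0 <= Lc ->
  (forall x y, Rabs (c x - c y) <= Lc * Rabs (x - y)) -> continuous c x.
Proof.
  intros HL H. apply continuity_pt_filterlim.
  intros eps Heps. exists (eps / (Lc + 1)). split; [apply Rdiv_lt_0_compat; lra|].
  intros y [_ Hy]. simpl in *. unfold R_dist in *.
  eapply Rle_lt_trans; [apply H|].
  apply Rle_lt_trans with ((Lc + 1) * Rabs (y - x)); [apply Rmult_le_compat_r; [apply Rabs_pos|lra]|].
  replace eps with ((Lc + 1) * (eps / (Lc + 1))) by (field; lra).
  apply Rmult_lt_compat_l; lra.
Qed.

Lemma is_derive_of_quadratic_remainder (F : R -> R) (x l C : R) : 0 <= C ->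
  (forall y, Rabs (F y - F x - (y - x) * l) <= C * (y - x) ^ 2) -> is_derive F x l.
Proof.
  intros HC H. apply is_derive_Reals. intros eps Heps.
  exists (mkposreal (eps / (C + 1)) ltac:(apply Rdiv_lt_0_compat; lra)).
  intros h Hh0 Hh. simpl in Hh.
  specialize (H (x + h)). replace (x + h - x) with h in H by ring.
  replace ((F (x + h) - F x) / h - l) with ((F (x + h) - F x - h * l) / h) by (field; auto).
  assert (Hah : 0 < Rabs h) by (apply Rabs_pos_lt; auto).
  unfold Rdiv at 1. rewrite Rabs_mult, Rabs_inv.
  apply Rmult_lt_reg_r with (Rabs h); auto.
  rewrite Rmult_assoc, Rinv_l, Rmult_1_r by lra.
  apply Rle_lt_trans with (1 := H).
  replace (h ^ 2) with (Rabs h * Rabs h) by (rewrite <- Rabs_mult, Rabs_pos_eq by nra; ring).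
  assert (Rabs h * (C + 1) < eps) by (apply Rmult_lt_reg_r with (/ (C + 1));
    [apply Rinv_0_lt_compat; lra| rewrite Rmult_assoc, Rinv_r, Rmult_1_r by lra; exact Hh]).
  nra.
Qed.

Definition clamp (T x : R) : R := Rmax 0 (Rmin T x).

Lemma clamp_range T x : 0 <= T -> 0 <= clamp T x <= T.
Proof. intros; unfold clamp, Rmax, Rmin; repeat destruct Rle_dec; lra. Qed.

Lemma clamp_id T x : 0 <= x <= T -> clamp T x = x.
Proof. intros; unfold clamp, Rmax, Rmin; repeat destruct Rle_dec; lra. Qed.

Lemma clamp_dist_le T x y : 0 <= T -> Rabs (clamp T x - clamp T y) <= Rabs (x - y).
Proof.
  intros; unfold clamp, Rmax, Rmin; repeat destruct Rle_dec; apply Rabs_le; split;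
    unfold Rabs; destruct Rcase_abs; lra.
Qed.

Lemma clamp_le_compat T x y : 0 <= T -> x <= y -> clamp T x <= clamp T y.
Proof. intros; unfold clamp, Rmax, Rmin; repeat destruct Rle_dec; lra. Qed.

Lemma clamp_cases T x y : 0 <= T -> x <= y ->
  Rabs (y - clamp T y) <= y - x \/ clamp T y = clamp T x.
Proof.
  intros; unfold clamp, Rmax, Rmin; repeat destruct Rle_dec;
    first [right; lra | left; apply Rabs_le; lra].
Qed.

Section QuadraticRemainder.

Variables (f c : R -> R) (T K Lc : R).
Hypotheses (T_ge0 : 0 <= T) (K_ge0 : 0 <= K) (Lc_ge0 : 0 <= Lc).
Hypothesis f_remainder : forall s t, 0 <= s <= t -> t <= T ->
  Rabs (f t - f s - (t - s) * c s) <= K * (t - s) ^ 2.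
Hypothesis c_lip : lipschitz_on c T Lc.

(* Extending [f] affinely (with slope [c]) outside [0, T] makes it differentiable on the closed
   interval, as [is_RInt_derive] requires. *)
Let c_ext x := c (clamp T x).
Let f_ext x := f (clamp T x) + (x - clamp T x) * c (clamp T x).

Lemma c_ext_lipschitz x y : Rabs (c_ext x - c_ext y) <= Lc * Rabs (x - y).
Proof.
  unfold c_ext. eapply Rle_trans; [apply c_lip; apply clamp_range; auto|].
  apply Rmult_le_compat_l; auto. apply clamp_dist_le; auto.
Qed.

Lemma f_ext_remainder_forward x y : x <= y ->
  Rabs (f_ext y - f_ext x - (y - x) * c_ext x) <= (K + Lc) * (y - x) ^ 2.
Proof.
  intros Hxy. unfold f_ext, c_ext.
  set (s := clamp T x). set (t := clamp T y).
  assert (Hs := clamp_range T x T_ge0). assert (Ht := clamp_range T y T_ge0). fold s in Hs. fold t in Ht.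
  assert (Hst : s <= t) by (apply clamp_le_compat; auto).
  assert (Hts : Rabs (t - s) <= Rabs (y - x)) by (apply clamp_dist_le; auto).
  rewrite !Rabs_pos_eq in Hts by lra.
  replace (f t + (y - t) * c t - (f s + (x - s) * c s) - (y - x) * c s)
    with ((f t - f s - (t - s) * c s) + (y - t) * (c t - c s)) by ring.
  eapply Rle_trans; [apply Rabs_triang|].
  assert (Hf : K * (t - s) ^ 2 <= K * (y - x) ^ 2) by (apply Rmult_le_compat_l; [lra|apply pow_incr; lra]).
  assert (Hc : Rabs ((y - t) * (c t - c s)) <= Lc * (y - x) ^ 2).
  { rewrite Rabs_mult. destruct (clamp_cases T x y T_ge0 Hxy) as [P|P]; fold t s in P.
    - assert (Rabs (c t - c s) <= Lc * (y - x))
        by (rewrite <- (Rabs_pos_eq (y - x)) by lra; eapply Rle_trans;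
            [apply c_lip; lra|apply Rmult_le_compat_l; [lra|rewrite !Rabs_pos_eq; lra]]).
      assert (0 <= Rabs (c t - c s)) by apply Rabs_pos. nra.
    - rewrite P, Rminus_diag, Rabs_R0, Rmult_0_r. apply Rmult_le_pos; [lra|apply pow2_ge_0]. }
  assert (F := f_remainder s t ltac:(lra) ltac:(lra)). lra.
Qed.

Lemma f_ext_remainder x y :
  Rabs (f_ext y - f_ext x - (y - x) * c_ext x) <= (K + 2 * Lc) * (y - x) ^ 2.
Proof.
  destruct (Rle_dec x y) as [Hxy|Hxy].
  { eapply Rle_trans; [apply f_ext_remainder_forward; auto|].
    apply Rmult_le_compat_r; [apply pow2_ge_0|lra]. }
  assert (A := f_ext_remainder_forward y x ltac:(lra)).
  replace (f_ext y - f_ext x - (y - x) * c_ext x)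
    with (- (f_ext x - f_ext y - (x - y) * c_ext y) + (x - y) * (c_ext x - c_ext y)) by ring.
  eapply Rle_trans; [apply Rabs_triang|]. rewrite Rabs_Ropp, Rabs_mult.
  assert (B := c_ext_lipschitz x y). rewrite (Rabs_pos_eq (x - y)) in B |- * by lra.
  replace ((x - y) ^ 2) with ((y - x) ^ 2) in A by ring.
  nra.
Qed.

Lemma is_RInt_of_quadratic_remainder : is_RInt c 0 T (f T - f 0).
Proof.
  assert (D := is_RInt_derive f_ext c_ext 0 T
     (fun x _ => is_derive_of_quadratic_remainder f_ext x (c_ext x) (K + 2 * Lc) ltac:(lra) (f_ext_remainder x))
     (fun x _ => lipschitz_continuous c_ext Lc x Lc_ge0 c_ext_lipschitz)).
  unfold f_ext in D. rewrite !clamp_id, !Rminus_diag, !Rmult_0_l, !Rplus_0_r in D by lra.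
  apply is_RInt_ext with c_ext; [|exact D].
  intros x Hx. rewrite Rmin_left, Rmax_right in Hx by lra.
  unfold c_ext. rewrite clamp_id by lra. reflexivity.
Qed.

End QuadraticRemainder.

Lemma lipschitz_vanishing_bound (f : R -> R) (b L x : R) :
  f 0 = 0 -> lipschitz_on f b L -> 0 <= x <= b -> Rabs (f x) <= L * x.
Proof.
  intros H0 Hf Hx. assert (X := Hf x 0 Hx ltac:(lra)).
  rewrite H0, !Rminus_0_r, (Rabs_pos_eq x) in X by lra. exact X.
Qed.

Lemma lipschitz_on_approx (f : R -> R) (b L : R) :
  (forall eps, 0 < eps -> exists h, lipschitz_on h b L /\ forall x, 0 <= x <= b -> Rabs (h x - f x) < eps) ->
  lipschitz_on f b L.
Proof.
  intros H x y Hx Hy. apply Rle_plus_epsilon. intros eps Heps.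
  destruct (H (eps / 2) ltac:(lra)) as [h [Hh Hhf]].
  assert (A := Hhf x Hx). assert (B := Hhf y Hy). assert (C := Hh x y Hx Hy).
  apply Rabs_def2 in A, B. apply Rabs_le_between in C.
  apply Rabs_le. lra.
Qed.

Lemma approx_flow_weaken (ph X : R -> R) (a K beta beta' : R) :
  beta <= beta' -> approx_flow ph a K beta X -> approx_flow ph a K beta' X.
Proof. intros Hb H s t Hst Hta. specialize (H s t Hst Hta). lra. Qed.

Lemma approx_flows_uniformly_close (ph : R -> R) (a B L M K eps : R) :
  0 < a -> 0 <= L -> 0 <= M -> 0 <= K -> 0 < eps -> exists beta0, 0 < beta0 /\
  forall X Y beta, 0 <= beta <= beta0 ->
    lipschitz_on ph B L -> (forall x, 0 <= x <= B -> Rabs (ph x) <= M) ->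
    (forall t, 0 <= t <= a -> 0 <= X t <= B) -> (forall t, 0 <= t <= a -> 0 <= Y t <= B) ->
    X 0 = Y 0 -> approx_flow ph a K beta X -> approx_flow ph a K beta Y ->
    forall t, 0 <= t <= a -> Rabs (X t - Y t) <= eps.
Proof.
  intros Ha HL HM HK Heps.
  set (E := exp (L * a)). assert (HE : 0 < E) by apply exp_pos.
  set (C := 2 * E * K * a ^ 2 + 2 * M * a + 2 * K * a ^ 2).
  assert (HC : 0 <= C) by (unfold C; assert (0 <= E * K) by nra; assert (0 <= a ^ 2) by nra; nra).
  destruct (INR_unbounded (2 * C / eps + 1)) as [N HN].
  assert (HCN : 2 * C / eps >= 0) by (apply Rle_ge, Rdiv_le_0_compat; lra).
  set (n := INR N) in *.
  exists (eps / (2 * (2 * E * n + 2))). split; [apply Rdiv_lt_0_compat; nra|].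
  intros X Y beta Hbeta Hlip Hph HX HY H0 HXf HYf t Ht.
  assert (Hn : 0 < n) by lra.
  assert (Hclose := approx_flows_close ph X Y a B L M K beta HL HM HK ltac:(lra) Hlip Hph HX HY H0 HXf HYf
    (a / n) N ltac:(apply Rdiv_lt_0_compat; lra) ltac:(fold n; field; lra) t Ht).
  eapply Rle_trans; [exact Hclose|]. fold E n.
  replace (E * n * (2 * K * (a / n) ^ 2 + 2 * beta) + 2 * (M * (a / n) + K * (a / n) ^ 2 + beta))
    with ((2 * E * K * a ^ 2 + 2 * M * a) / n + 2 * K * a ^ 2 / (n * n) + beta * (2 * E * n + 2))
    by (field; lra).
  assert (Hb : beta * (2 * E * n + 2) <= eps / 2).
  { replace (eps / 2) with (eps / (2 * (2 * E * n + 2)) * (2 * E * n + 2)) by (field; nra).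
    apply Rmult_le_compat_r; nra. }
  assert (Hn2 : 2 * K * a ^ 2 / (n * n) <= 2 * K * a ^ 2 / n).
  { unfold Rdiv. apply Rmult_le_compat_l; [assert (0 <= a ^ 2) by nra; nra|].
    apply Rinv_le_contravar; nra. }
  assert (HCn : C / n <= eps / 2).
  { apply Rmult_le_reg_r with (2 * n / eps); [apply Rdiv_lt_0_compat; lra|].
    replace (C / n * (2 * n / eps)) with (2 * C / eps) by (field; lra).
    replace (eps / 2 * (2 * n / eps)) with n by (field; lra). lra. }
  unfold C in HCn.
  replace ((2 * E * K * a ^ 2 + 2 * M * a + 2 * K * a ^ 2) / n)
    with ((2 * E * K * a ^ 2 + 2 * M * a) / n + 2 * K * a ^ 2 / n) in HCn by (field; lra).
  lra.
Qed.

Lemma exact_flow_integral (ph X : R -> R) (a B L M K : R) :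
  0 <= a -> 0 <= L -> 0 <= M -> 0 <= K ->
  lipschitz_on ph B L -> (forall x, 0 <= x <= B -> Rabs (ph x) <= M) ->
  (forall t, 0 <= t <= a -> 0 <= X t <= B) -> approx_flow ph a K 0 X ->
  is_RInt (fun s => ph (X s)) 0 a (X 0 - X a).
Proof.
  intros Ha HL HM HK Hlip Hph HX HXf.
  assert (HXlip : lipschitz_on X a (M + K * a)).
  { assert (W : forall x y, 0 <= x <= y -> y <= a -> Rabs (X y - X x) <= (M + K * a) * (y - x)).
    { intros x y Hxy Hya.
      assert (I := approx_flow_increment ph X a B M K 0 Hph HX HXf x y Hxy Hya).
      assert (K * (y - x) ^ 2 <= K * a * (y - x)) by (assert (0 <= K * (y - x)) by nra; nra). nra. }
    intros x y Hx Hy. destruct (Rle_dec x y).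
    - rewrite Rabs_minus_sym, (Rabs_minus_sym x y), (Rabs_pos_eq (y - x)) by lra. apply W; lra.
    - rewrite (Rabs_pos_eq (x - y)) by lra. apply W; lra. }
  assert (Hc : lipschitz_on (fun s => - ph (X s)) a (L * (M + K * a))).
  { intros x y Hx Hy. replace (- ph (X x) - - ph (X y)) with (- (ph (X x) - ph (X y))) by ring.
    rewrite Rabs_Ropp, Rmult_assoc. eapply Rle_trans; [apply Hlip; apply HX; lra|].
    apply Rmult_le_compat_l; auto. }
  assert (Hrem : forall s t, 0 <= s <= t -> t <= a ->
            Rabs (X t - X s - (t - s) * - ph (X s)) <= K * (t - s) ^ 2).
  { intros s t Hst Hta. replace (X t - X s - (t - s) * - ph (X s)) with (X t - X s + (t - s) * ph (X s)) by ring.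
    rewrite <- (Rplus_0_r (K * (t - s) ^ 2)). apply HXf; auto. }
  assert (I := is_RInt_of_quadratic_remainder X (fun s => - ph (X s)) a K (L * (M + K * a))
                 Ha HK ltac:(apply Rmult_le_pos; nra)
                 Hrem Hc).
  apply is_RInt_opp in I.
  replace (X 0 - X a) with (opp (X a - X 0)) by (unfold opp; simpl; ring).
  apply is_RInt_ext with (fun s => opp (- ph (X s))); [intros; unfold opp; simpl; ring|exact I].
Qed.

Lemma approx_flow_restrict (ph X : R -> R) (a a' K beta : R) :
  a' <= a -> approx_flow ph a K beta X -> approx_flow ph a' K beta X.
Proof. intros Ha H s t Hst Hta. apply H; lra. Qed.

Lemma Rabs_triang_4 a b c d : Rabs (a - b + c - d) <= Rabs a + Rabs b + Rabs c + Rabs d.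
Proof.
  assert (T1 := Rabs_triang (a - b + c) (- d)).
  assert (T2 := Rabs_triang (a - b) c).
  assert (T3 := Rabs_triang a (- b)).
  rewrite Rabs_Ropp in T1, T3. unfold Rminus in *. lra.
Qed.

Lemma is_lim_seq_dist_le (u : nat -> R) (l x e : R) (N : nat) :
  is_lim_seq u l -> (forall m, (N <= m)%nat -> Rabs (x - u m) <= e) -> Rabs (x - l) <= e.
Proof.
  intros Hl H. apply Rle_plus_epsilon. intros b Hb.
  apply is_lim_seq_spec in Hl. destruct (Hl (mkposreal b Hb)) as [N' HN']. simpl in HN'.
  assert (A := H (Nat.max N N') (Nat.le_max_l _ _)). assert (B := HN' (Nat.max N N') (Nat.le_max_r _ _)).
  replace (x - l) with ((x - u (Nat.max N N')) + (u (Nat.max N N') - l)) by ring.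
  eapply Rle_trans; [apply Rabs_triang|]. lra.
Qed.

Lemma is_lim_seq_range (u : nat -> R) (l B : R) (N : nat) :
  is_lim_seq u l -> (forall n, (N <= n)%nat -> 0 <= u n <= B) -> 0 <= l <= B.
Proof.
  intros Hl H. split.
  - apply (is_lim_seq_le_loc (fun _ => 0) u 0 l); [exists N; apply H|apply is_lim_seq_const|exact Hl].
  - apply (is_lim_seq_le_loc u (fun _ => B) l B); [exists N; apply H|exact Hl|apply is_lim_seq_const].
Qed.

Lemma approx_flow_limit (ph : R -> R) (Xs : nat -> R -> R) (X : R -> R) (a B L K : R) :
  0 <= a -> 0 <= L -> lipschitz_on ph B L ->
  (forall t, 0 <= t <= a -> 0 <= X t <= B) ->
  (forall t, 0 <= t <= a -> is_lim_seq (fun k => Xs k t) (X t)) ->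
  (forall beta, 0 < beta -> exists N, forall k, (N <= k)%nat ->
     (forall t, 0 <= t <= a -> 0 <= Xs k t <= B) /\ approx_flow ph a K beta (Xs k)) ->
  approx_flow ph a K 0 X.
Proof.
  intros Ha HL Hlip HX Hlim Happ s t Hst Hta.
  rewrite Rplus_0_r. apply Rle_plus_epsilon. intros e He.
  set (b := e / (3 + a * L)).
  assert (Hb : 0 < b) by (apply Rdiv_lt_0_compat; nra).
  destruct (Happ b Hb) as [N0 HN0].
  destruct (proj2 (is_lim_seq_spec _ _) (Hlim s ltac:(lra)) (mkposreal b Hb)) as [Ns HNs].
  destruct (proj2 (is_lim_seq_spec _ _) (Hlim t ltac:(lra)) (mkposreal b Hb)) as [Nt HNt].
  set (k := Nat.max N0 (Nat.max Ns Nt)).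
  destruct (HN0 k ltac:(lia)) as [Hrange Hflow].
  assert (Zs := HNs k ltac:(lia)). assert (Zt := HNt k ltac:(lia)). simpl in Zs, Zt.
  assert (Lp := Hlip (X s) (Xs k s) (HX s ltac:(lra)) (Hrange s ltac:(lra))).
  assert (Q := Hflow s t Hst Hta).
  rewrite Rabs_minus_sym in Lp.
  assert (Zs' : Rabs (X s - Xs k s) < b) by (rewrite Rabs_minus_sym; exact Zs).
  replace (X t - X s + (t - s) * ph (X s)) with
    ((Xs k t - Xs k s + (t - s) * ph (Xs k s)) - (Xs k t - X t) + (Xs k s - X s)
     - (t - s) * (ph (Xs k s) - ph (X s))) by ring.
  assert (Hts : (t - s) * Rabs (ph (Xs k s) - ph (X s)) <= a * (L * b))
    by (apply Rmult_le_compat; try lra; [apply Rabs_pos|nra]).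
  assert (E : e = 3 * b + a * (L * b)) by (unfold b; field; nra).
  eapply Rle_trans; [apply Rabs_triang_4|].
  rewrite Rabs_mult, (Rabs_pos_eq (t - s)) by lra. lra.
Qed.

Lemma euler_error_le (a L M eta beta gm : R) : 0 <= a -> 0 <= L -> 0 <= M -> 0 < beta ->
  (a + 1) * eta <= beta / 3 -> 3 * (2 * L * (M + 1) + M) / beta + 1 < gm ->
  (a + 1) * eta + 2 * L * (M + 1) / gm ^ 2 + M / gm <= beta.
Proof.
  intros Ha HL HM Hb Heta Hgm.
  assert (H0 : 0 <= 3 * (2 * L * (M + 1) + M) / beta) by (apply Rdiv_le_0_compat; nra).
  assert (H1 : 2 * L * (M + 1) / gm ^ 2 <= 2 * L * (M + 1) / gm).
  { unfold Rdiv. apply Rmult_le_compat_l; [nra|]. apply Rinv_le_contravar; nra. }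
  assert (H2 : 3 * (2 * L * (M + 1) + M) <= beta * gm).
  { apply Rmult_le_reg_r with (/ beta); [apply Rinv_0_lt_compat; lra|].
    replace (beta * gm * / beta) with gm by (field; lra). unfold Rdiv in Hgm. lra. }
  assert (H3 : 2 * L * (M + 1) / gm + M / gm <= beta / 3).
  { replace (2 * L * (M + 1) / gm + M / gm) with ((2 * L * (M + 1) + M) / gm) by (field; lra).
    apply Rmult_le_reg_r with (3 * gm); [lra|].
    replace ((2 * L * (M + 1) + M) / gm * (3 * gm)) with (3 * (2 * L * (M + 1) + M)) by (field; lra).
    lra. }
  lra.
Qed.

(** * The rescaled iterates *)

Section Scaling.

Variables (gam : nat -> R) (g : nat -> R -> R) (phi : R -> R).
Hypothesis gam_pos : forall k, (1 <= k)%nat -> 0 < gam k.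
Hypothesis gam_unbounded : forall M, exists N, forall k, (N <= k)%nat -> M < gam k.
Hypothesis g_pgf : forall k, (1 <= k)%nat -> is_pgf (g k).
Hypothesis G_lipschitz : forall a, 0 <= a -> exists L, forall k, (1 <= k)%nat ->
  lipschitz_on (Gk gam g k) a L.
Hypothesis G_to_phi : forall a, 0 <= a -> forall eps, 0 < eps -> exists N,
  forall k, (1 <= k)%nat -> (N <= k)%nat ->
    forall z, 0 <= z <= a -> Rabs (Gk gam g k z - phi z) < eps.

Lemma Gk_0 k : (1 <= k)%nat -> Gk gam g k 0 = 0.
Proof.
  intros Hk. unfold Gk.
  replace (- 0 / INR k) with 0 by (unfold Rdiv; ring).
  rewrite exp_0, (pgf_at_1 _ (g_pgf k Hk)). ring.
Qed.

Lemma G_lipschitz_nonneg b : 0 <= b ->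
  exists L, 0 <= L /\ forall k, (1 <= k)%nat -> lipschitz_on (Gk gam g k) b L.
Proof.
  intros Hb. destruct (G_lipschitz b Hb) as [L HL].
  exists (Rmax 0 L). split; [apply Rmax_l|].
  intros k Hk x y Hx Hy. eapply Rle_trans; [apply HL; auto|].
  apply Rmult_le_compat_r; [apply Rabs_pos|apply Rmax_r].
Qed.

Lemma G_approximates_phi b eps : 0 <= b -> 0 < eps ->
  exists k, (1 <= k)%nat /\ forall z, 0 <= z <= b -> Rabs (Gk gam g k z - phi z) < eps.
Proof.
  intros Hb Heps. destruct (G_to_phi b Hb eps Heps) as [N HN].
  exists (Nat.max 1 N). split; [lia|]. apply HN; lia.
Qed.

Lemma phi_0 : phi 0 = 0.
Proof.
  destruct (Req_dec (phi 0) 0) as [|Hne]; auto. exfalso.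
  destruct (G_approximates_phi 0 (Rabs (phi 0)) ltac:(lra) (Rabs_pos_lt _ Hne)) as [k [Hk Hc]].
  specialize (Hc 0 ltac:(lra)). rewrite Gk_0, Rminus_0_l, Rabs_Ropp in Hc by exact Hk. lra.
Qed.

Lemma phi_lipschitz_bounded b : 0 <= b -> exists L, 0 <= L /\
  (forall k, (1 <= k)%nat -> lipschitz_on (Gk gam g k) b L) /\
  lipschitz_on phi b L /\ (forall x, 0 <= x <= b -> Rabs (phi x) <= L * b).
Proof.
  intros Hb. destruct (G_lipschitz_nonneg b Hb) as [L [HL HGL]].
  assert (HphiL : lipschitz_on phi b L).
  { apply lipschitz_on_approx. intros eps Heps.
    destruct (G_approximates_phi b eps Hb Heps) as [k [Hk Hc]]. exists (Gk gam g k). auto. }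
  exists L. do 3 (split; [assumption|]).
  intros x Hx. eapply Rle_trans; [exact (lipschitz_vanishing_bound _ _ _ x phi_0 HphiL Hx)|].
  apply Rmult_le_compat_l; lra.
Qed.

Definition iter_seq (k : nat) (lam : R) (n : nat) : R := iter_fun n (g k) (exp (- lam / INR k)).

Definition log_seq (k : nat) (lam : R) (n : nat) : R := - INR k * ln (iter_seq k lam n).

Lemma vk_log_seq k t lam : vk gam g k t lam = log_seq k lam (int_part (gam k * t)).
Proof. reflexivity. Qed.

Lemma vk_at_0 k lam : (1 <= k)%nat -> vk gam g k 0 lam = lam.
Proof.
  intros Hk. rewrite vk_log_seq, Rmult_0_r, int_part_0. unfold log_seq, iter_seq. simpl.
  rewrite ln_exp. field. apply not_0_INR. lia.
Qed.

Lemma iter_seq_bounds k lam L1 : (1 <= k)%nat -> 0 <= L1 -> lipschitz_on (Gk gam g k) 1 L1 ->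
  0 <= lam -> forall n,
    0 <= iter_seq k lam n <= 1 /\
    1 - iter_seq k lam n <= (1 + 2 * L1 / gam k) ^ n * (lam / INR k).
Proof.
  intros Hk HL1 Hlip1 Hlam.
  assert (Hkk : 1 <= INR k) by (apply (le_INR 1); exact Hk).
  assert (Hgm := gam_pos k Hk).
  assert (Hgrowth := pgf_one_sub_le (g k) (g_pgf k Hk) (INR k) (gam k) L1 Hkk Hgm HL1
    (fun w Hw => lipschitz_vanishing_bound _ 1 L1 w (Gk_0 k Hk) Hlip1 Hw)).
  induction n as [|n [IH1 IH2]].
  - unfold iter_seq; simpl.
    assert (0 <= lam / INR k) by (apply Rdiv_le_0_compat; lra).
    assert (E := exp_ineq1_le (- lam / INR k)).
    assert (exp (- lam / INR k) <= 1) by (rewrite <- exp_0; apply exp_le_mono; unfold Rdiv in *; lra).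
    split; [split; [left; apply exp_pos|lra]|unfold Rdiv in *; lra].
  - change (iter_seq k lam (S n)) with (g k (iter_seq k lam n)).
    split; [apply pgf_unit_interval; auto|].
    eapply Rle_trans; [apply Hgrowth; exact IH1|]. simpl. rewrite Rmult_assoc.
    apply Rmult_le_compat_l; [|exact IH2].
    assert (0 <= 2 * L1 / gam k) by (apply Rdiv_le_0_compat; lra). lra.
Qed.

Lemma iter_seq_near_1 a k lam L1 n : (1 <= k)%nat -> 0 <= L1 -> lipschitz_on (Gk gam g k) 1 L1 ->
  0 <= lam <= a -> (n <= int_part (gam k * a))%nat ->
  1 - iter_seq k lam n <= (a + 1) * exp (2 * L1 * a) / INR k.
Proof.
  intros Hk HL1 Hlip1 Hlam Hn.
  assert (Hkk : 1 <= INR k) by (apply (le_INR 1); exact Hk).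
  assert (Hgm := gam_pos k Hk).
  destruct (iter_seq_bounds k lam L1 Hk HL1 Hlip1 ltac:(lra) n) as [_ H].
  eapply Rle_trans; [exact H|].
  assert (Hpow : (1 + 2 * L1 / gam k) ^ n <= exp (2 * L1 * a)).
  { eapply Rle_trans; [apply pow_1_plus_le_exp; apply Rdiv_le_0_compat; lra|].
    apply exp_le_mono.
    assert (INR n <= gam k * a).
    { eapply Rle_trans; [apply le_INR; exact Hn|]. apply int_part_bounds. nra. }
    replace (INR n * (2 * L1 / gam k)) with (2 * L1 * (INR n / gam k)) by (field; lra).
    apply Rmult_le_compat_l; [lra|].
    apply Rmult_le_reg_r with (gam k); [lra|].
    unfold Rdiv; rewrite Rmult_assoc, Rinv_l by lra. lra. }
  replace ((a + 1) * exp (2 * L1 * a) / INR k) with (exp (2 * L1 * a) * ((a + 1) / INR k)) by (field; lra).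
  apply Rmult_le_compat; try lra.
  - apply pow_le. assert (0 <= 2 * L1 / gam k) by (apply Rdiv_le_0_compat; lra). lra.
  - apply Rdiv_le_0_compat; lra.
  - unfold Rdiv. apply Rmult_le_compat_r; [left; apply Rinv_0_lt_compat|]; lra.
Qed.

Lemma log_seq_range (k : nat) (lam D : R) (n : nat) : (1 <= k)%nat ->
  0 <= iter_seq k lam n <= 1 -> 1 - iter_seq k lam n <= D / INR k -> 2 * D <= INR k ->
  1/2 <= iter_seq k lam n /\ 0 <= log_seq k lam n <= 2 * D.
Proof.
  intros Hk1 Hs HD HkD. set (s := iter_seq k lam n) in *.
  assert (Hk : 0 < INR k) by (apply lt_0_INR; lia).
  assert (HDk : D / INR k <= 1/2)
    by (apply Rmult_le_reg_r with (INR k); [lra|]; unfold Rdiv; rewrite Rmult_assoc, Rinv_l by lra; lra).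
  assert (Hs2 : 1/2 <= s) by lra. split; [exact Hs2|]. unfold log_seq; fold s.
  assert (Hln : ln s <= 0) by (rewrite <- ln_1; apply ln_le; lra).
  assert (Hln2 : - ln s <= 2 * (1 - s)).
  { rewrite <- ln_Rinv by lra.
    eapply Rle_trans; [apply ln_le_sub_1; apply Rinv_0_lt_compat; lra|].
    replace (/ s - 1) with ((1 - s) / s) by (field; lra).
    apply Rmult_le_reg_r with s; [lra|]. unfold Rdiv; rewrite Rmult_assoc, Rinv_l by lra. nra. }
  assert (INR k * (1 - s) <= D)
    by (replace D with (INR k * (D / INR k)) by (field; lra); apply Rmult_le_compat_l; lra).
  split; nra.
Qed.

Lemma log_seq_residual k lam n D B L eta : (1 <= k)%nat -> 1 <= gam k -> 0 <= L -> 0 < eta ->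
  1/2 <= iter_seq k lam n <= 1 -> 1 - iter_seq k lam n <= D / INR k -> 0 <= log_seq k lam n <= B ->
  lipschitz_on (Gk gam g k) B L ->
  (forall z, 0 <= z <= B -> Rabs (Gk gam g k z - phi z) <= eta / 3) ->
  4 * (L * B) <= INR k -> 24 * (L * B) ^ 2 / eta <= INR k -> 6 * (L * B) * D / eta <= INR k ->
  Rabs (gam k * (log_seq k lam (S n) - log_seq k lam n) + phi (log_seq k lam n)) <= eta.
Proof.
  intros Hk Hgm HL Heta Hs HD Hu HlipB Happ HM4 HM24 HMD.
  assert (Hkk : 1 <= INR k) by (apply (le_INR 1); exact Hk).
  set (u := log_seq k lam n) in *. set (s := iter_seq k lam n) in *. set (M := L * B) in *.
  assert (HM : 0 <= M) by (unfold M; nra).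
  assert (EG : INR k * gam k * (iter_seq k lam (S n) - s) = Gk gam g k u).
  { unfold Gk, u, log_seq. fold s.
    replace (- (- INR k * ln s) / INR k) with (ln s) by (field; lra).
    rewrite exp_ln by lra. reflexivity. }
  assert (HGb : Rabs (INR k * gam k * (iter_seq k lam (S n) - s)) <= M).
  { rewrite EG. eapply Rle_trans; [apply (lipschitz_vanishing_bound _ B L u (Gk_0 k Hk) HlipB Hu)|].
    unfold M. apply Rmult_le_compat_l; lra. }
  assert (HGc : Rabs (INR k * gam k * (iter_seq k lam (S n) - s) - phi u) <= eta / 3)
    by (rewrite EG; apply Happ; exact Hu).
  assert (Est := log_increment_estimate (INR k) (gam k) s (iter_seq k lam (S n)) M (eta / 3) (phi u) D
                   Hkk Hgm Hs HD HM ltac:(nra) HGb HGc).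
  eapply Rle_trans; [exact Est|].
  assert (8 * M ^ 2 / (INR k * gam k) <= eta / 3).
  { apply Rmult_le_reg_r with (INR k * gam k); [nra|].
    replace (8 * M ^ 2 / (INR k * gam k) * (INR k * gam k)) with (8 * M ^ 2) by (field; nra).
    assert (24 * M ^ 2 <= eta * INR k)
      by (replace (24 * M ^ 2) with (eta * (24 * M ^ 2 / eta)) by (field; lra); apply Rmult_le_compat_l; lra).
    nra. }
  assert (2 * M * D / INR k <= eta / 3).
  { apply Rmult_le_reg_r with (INR k); [lra|].
    replace (2 * M * D / INR k * INR k) with (2 * M * D) by (field; lra).
    assert (6 * M * D <= eta * INR k)
      by (replace (6 * M * D) with (eta * (6 * M * D / eta)) by (field; lra); apply Rmult_le_compat_l; lra).
    lra. }
  lra.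
Qed.

Lemma log_seq_scheme a k lam L1 L D eta : (1 <= k)%nat -> 1 <= gam k -> 0 <= L1 -> 0 <= L ->
  0 < eta -> 0 <= lam <= a -> (a + 1) * exp (2 * L1 * a) <= D ->
  lipschitz_on (Gk gam g k) 1 L1 -> lipschitz_on (Gk gam g k) (2 * D) L ->
  (forall z, 0 <= z <= 2 * D -> Rabs (Gk gam g k z - phi z) <= eta / 3) ->
  24 * (L * (2 * D)) ^ 2 / eta + 6 * (L * (2 * D)) * D / eta + 2 * D + 4 * (L * (2 * D)) <= INR k ->
  (forall n, (n <= int_part (gam k * a))%nat -> 0 <= log_seq k lam n <= 2 * D) /\
  (forall n, (n < int_part (gam k * a))%nat ->
     Rabs (gam k * (log_seq k lam (S n) - log_seq k lam n) + phi (log_seq k lam n)) <= eta).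
Proof.
  intros Hk Hgm HL1 HL Heta Hlam HD Hlip1 HlipB Happ Hkk.
  assert (HD0 : 0 <= D) by (assert (0 < exp (2 * L1 * a)) by apply exp_pos; nra).
  assert (HM : 0 <= L * (2 * D)) by nra.
  assert (Hc1 : 0 <= 24 * (L * (2 * D)) ^ 2 / eta) by (apply Rdiv_le_0_compat; nra).
  assert (Hc2 : 0 <= 6 * (L * (2 * D)) * D / eta) by (apply Rdiv_le_0_compat; nra).
  assert (Hrange : forall n, (n <= int_part (gam k * a))%nat ->
            1/2 <= iter_seq k lam n <= 1 /\ 1 - iter_seq k lam n <= D / INR k /\
            0 <= log_seq k lam n <= 2 * D).
  { intros n Hn.
    assert (B1 := proj1 (iter_seq_bounds k lam L1 Hk HL1 Hlip1 ltac:(lra) n)).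
    assert (B2 : 1 - iter_seq k lam n <= D / INR k).
    { eapply Rle_trans; [exact (iter_seq_near_1 a k lam L1 n Hk HL1 Hlip1 Hlam Hn)|].
      unfold Rdiv. apply Rmult_le_compat_r; [left; apply Rinv_0_lt_compat, lt_0_INR; lia|exact HD]. }
    destruct (log_seq_range k lam D n Hk B1 B2 ltac:(lra)) as [Hhalf Hu].
    split; [lra|split; [exact B2|exact Hu]]. }
  split; [intros n Hn; apply Hrange, Hn|].
  intros n Hn. destruct (Hrange n ltac:(lia)) as (Hs & HDk & Hu).
  apply (log_seq_residual k lam n D (2 * D) L eta); auto; lra.
Qed.

Lemma vk_approx_flow a : 0 <= a -> exists B L M,
  0 <= L /\ 0 <= M /\ lipschitz_on phi B L /\ (forall x, 0 <= x <= B -> Rabs (phi x) <= M) /\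
  forall beta, 0 < beta -> exists N, forall k, (1 <= k)%nat -> (N <= k)%nat ->
    forall lam, 0 <= lam <= a ->
      (forall t, 0 <= t <= a -> 0 <= vk gam g k t lam <= B) /\
      approx_flow phi a (2 * L * (M + 1)) beta (fun t => vk gam g k t lam).
Proof.
  intros Ha.
  destruct (G_lipschitz_nonneg 1 ltac:(lra)) as [L1 [HL1 Hlip1]].
  set (D := (a + 1) * exp (2 * L1 * a)).
  assert (HD : 0 <= D) by (unfold D; assert (0 < exp (2 * L1 * a)) by apply exp_pos; nra).
  destruct (phi_lipschitz_bounded (2 * D) ltac:(lra)) as (L & HL & HlipB & HphiL & Hphib).
  set (M := L * (2 * D)) in Hphib. assert (HM : 0 <= M) by (unfold M; nra).
  exists (2 * D), L, M. do 4 (split; [assumption|]).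
  intros beta Hbeta.
  set (eta := Rmin 1 (beta / (3 * (a + 1)))).
  assert (Heta : 0 < eta <= 1 /\ (a + 1) * eta <= beta / 3).
  { assert (0 < beta / (3 * (a + 1))) by (apply Rdiv_lt_0_compat; lra).
    unfold eta. split; [split; [apply Rmin_glb_lt; lra|apply Rmin_l]|].
    replace (beta / 3) with ((a + 1) * (beta / (3 * (a + 1)))) by (field; lra).
    apply Rmult_le_compat_l; [lra|apply Rmin_r]. }
  destruct (G_to_phi (2 * D) ltac:(lra) (eta / 3) ltac:(lra)) as [N1 HN1].
  destruct (gam_unbounded (3 * (2 * L * (M + 1) + M) / beta + 1)) as [N2 HN2].
  destruct (INR_unbounded (24 * M ^ 2 / eta + 6 * M * D / eta + 2 * D + 4 * M)) as [N3 HN3].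
  exists (Nat.max N1 (Nat.max N2 N3)). intros k Hk HkN lam Hlam.
  assert (Hkk : INR N3 <= INR k) by (apply le_INR; lia).
  assert (Hgm : 3 * (2 * L * (M + 1) + M) / beta + 1 < gam k) by (apply HN2; lia).
  assert (Hgm1 : 1 <= gam k)
    by (assert (0 <= 3 * (2 * L * (M + 1) + M) / beta) by (apply Rdiv_le_0_compat; nra); lra).
  destruct (log_seq_scheme a k lam L1 L D eta Hk Hgm1 HL1 HL ltac:(lra) Hlam ltac:(unfold D; lra)
              (Hlip1 k Hk) (HlipB k Hk) (fun z Hz => Rlt_le _ _ (HN1 k Hk ltac:(lia) z Hz)) ltac:(fold M; lra))
    as [Hrange Hres].
  assert (F := euler_interpolant_approx_flow (log_seq k lam) phi (gam k) eta L M (2 * D) a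
                 Hgm1 ltac:(lra) HL HM Hrange HphiL Hphib Hres).
  split.
  - intros t Ht. rewrite vk_log_seq. apply Hrange, int_part_le_compat. nra.
  - eapply approx_flow_weaken; [|exact F]. apply euler_error_le; lra.
Qed.

Lemma vk_cauchy a : 0 <= a -> forall eps, 0 < eps -> exists N,
  forall k m, (1 <= k)%nat -> (1 <= m)%nat -> (N <= k)%nat -> (N <= m)%nat ->
    forall t lam, 0 <= t <= a -> 0 <= lam <= a ->
      Rabs (vk gam g k t lam - vk gam g m t lam) <= eps.
Proof.
  intros Ha eps Heps.
  destruct (vk_approx_flow (a + 1) ltac:(lra)) as (B & L & M & HL & HM & Hlip & Hphb & Happ).
  destruct (approx_flows_uniformly_close phi (a + 1) B L M (2 * L * (M + 1)) eps ltac:(lra) HL HM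
              ltac:(nra) Heps) as [beta0 [Hb0 Hclose]].
  destruct (Happ beta0 Hb0) as [N HN].
  exists N. intros k m Hk Hm HNk HNm t lam Ht Hlam.
  destruct (HN k Hk HNk lam ltac:(lra)) as [Xr Xf]. destruct (HN m Hm HNm lam ltac:(lra)) as [Yr Yf].
  apply (Hclose (fun t => vk gam g k t lam) (fun t => vk gam g m t lam) beta0); auto; try lra.
  rewrite !vk_at_0; auto.
Qed.

Definition v_lim (t lam : R) : R := real (Lim_seq (fun k => vk gam g k t lam)).

Lemma vk_converges t lam : 0 <= t -> 0 <= lam ->
  is_lim_seq (fun k => vk gam g k t lam) (v_lim t lam).
Proof.
  intros Ht Hlam.
  assert (Hc : ex_lim_seq_cauchy (fun k => vk gam g k t lam)).
  { intros [e He]. simpl.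
    destruct (vk_cauchy (Rmax t lam) ltac:(apply Rle_trans with t; [lra|apply Rmax_l]) (e / 2) ltac:(lra))
      as [N HN].
    exists (Nat.max N 1). intros n m Hn Hm.
    eapply Rle_lt_trans; [apply HN; try lia|lra].
    - split; [lra|apply Rmax_l].
    - split; [lra|apply Rmax_r]. }
  destruct (proj2 (ex_lim_seq_cauchy_corr _) Hc) as [l Hl].
  unfold v_lim. rewrite (is_lim_seq_unique _ _ Hl). exact Hl.
Qed.

Lemma vk_uniform_convergence a : 0 <= a -> forall eps, 0 < eps -> exists N,
  forall k, (1 <= k)%nat -> (N <= k)%nat -> forall t lam, 0 <= t <= a -> 0 <= lam <= a ->
    Rabs (vk gam g k t lam - v_lim t lam) <= eps.
Proof.
  intros Ha eps Heps.
  destruct (vk_cauchy a Ha eps Heps) as [N HN].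
  exists (Nat.max N 1). intros k Hk HNk t lam Ht Hlam.
  apply (is_lim_seq_dist_le (fun m => vk gam g m t lam) _ _ _ (Nat.max N 1)).
  - apply vk_converges; lra.
  - intros m Hm. apply HN; auto; lia.
Qed.

Lemma v_lim_exact_flow A : 0 <= A -> exists B L M,
  0 <= L /\ 0 <= M /\ lipschitz_on phi B L /\ (forall x, 0 <= x <= B -> Rabs (phi x) <= M) /\
  forall lam, 0 <= lam <= A ->
    v_lim 0 lam = lam /\ (forall t, 0 <= t <= A -> 0 <= v_lim t lam <= B) /\
    approx_flow phi A (2 * L * (M + 1)) 0 (fun t => v_lim t lam).
Proof.
  intros HA.
  destruct (vk_approx_flow A HA) as (B & L & M & HL & HM & Hlip & Hphb & Happ).
  exists B, L, M. do 4 (split; [assumption|]). intros lam Hlam.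
  destruct (Happ 1 ltac:(lra)) as [N HN].
  assert (Hrange : forall t, 0 <= t <= A -> 0 <= v_lim t lam <= B).
  { intros t Ht. apply (is_lim_seq_range (fun k => vk gam g k t lam) _ _ (Nat.max 1 N)).
    - apply vk_converges; lra.
    - intros n Hn. apply (HN n ltac:(lia) ltac:(lia) lam Hlam); exact Ht. }
  split; [|split; [exact Hrange|]].
  - assert (D : Rabs (lam - v_lim 0 lam) <= 0).
    { apply (is_lim_seq_dist_le (fun k => vk gam g k 0 lam) _ _ _ 1); [apply vk_converges; lra|].
      intros m Hm. rewrite vk_at_0, Rminus_diag, Rabs_R0 by exact Hm. lra. }
    apply Rabs_le_between in D. lra.
  - apply (approx_flow_limit phi (fun k t => vk gam g k t lam) _ A B L); auto.
    + intros t Ht. apply vk_converges; lra.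
    + intros beta Hbeta. destruct (Happ beta Hbeta) as [N' HN'].
      exists (Nat.max 1 N'). intros k Hk. apply HN'; auto; lia.
Qed.

Lemma v_lim_integral_equation t lam : 0 <= t -> 0 <= lam ->
  is_RInt (fun s => phi (v_lim s lam)) 0 t (lam - v_lim t lam).
Proof.
  intros Ht Hlam. set (A := Rmax t lam).
  assert (HtA : t <= A) by apply Rmax_l. assert (HlA : lam <= A) by apply Rmax_r.
  destruct (v_lim_exact_flow A ltac:(lra)) as (B & L & M & HL & HM & Hlip & Hphb & Hv).
  destruct (Hv lam ltac:(lra)) as (V0 & VB & Vf).
  rewrite <- V0 at 1.
  apply (exact_flow_integral phi (fun s => v_lim s lam) t B L M (2 * L * (M + 1))); auto; try nra.
  - intros s Hs. apply VB; lra.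
  - exact (approx_flow_restrict _ _ A t _ _ HtA Vf).
Qed.

End Scaling.

Theorem theorem2p1p6 (gam : nat -> R) (g : nat -> R -> R) (phi : R -> R)
  (Hgam_pos : forall k, (1 <= k)%nat -> 0 < gam k)
  (Hgam_inf : forall M, exists N, forall k, (N <= k)%nat -> M < gam k)
  (Hpgf : forall k, (1 <= k)%nat -> is_pgf (g k))
  (Hlip : forall a, 0 <= a -> exists L, forall k, (1 <= k)%nat ->
            forall x y, 0 <= x <= a -> 0 <= y <= a ->
              Rabs (Gk gam g k x - Gk gam g k y) <= L * Rabs (x - y))
  (Hconv : forall a, 0 <= a -> forall eps, 0 < eps -> exists N,
            forall k, (1 <= k)%nat -> (N <= k)%nat ->
              forall z, 0 <= z <= a -> Rabs (Gk gam g k z - phi z) < eps) :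
  exists v : R -> R -> R,
    (forall a, 0 <= a -> forall eps, 0 < eps -> exists N,
       forall k, (1 <= k)%nat -> (N <= k)%nat ->
         forall t lam, 0 <= t <= a -> 0 <= lam <= a ->
           Rabs (vk gam g k t lam - v t lam) < eps) /\
    (forall t lam, 0 <= t -> 0 <= lam ->
       is_RInt (fun s => phi (v s lam)) 0 t (lam - v t lam)).
Proof.
  exists (v_lim gam g). split.
  - intros a Ha eps Heps.
    destruct (vk_uniform_convergence gam g phi Hgam_pos Hgam_inf Hpgf Hlip Hconv a Ha (eps / 2) ltac:(lra))
      as [N HN].
    exists N. intros k Hk HNk t lam Ht Hlam.
    eapply Rle_lt_trans; [apply HN; auto|lra].
  - exact (v_lim_integral_equation gam g phi Hgam_pos Hgam_inf Hpgf Hlip Hconv).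
Qed.
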